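(* Consider the setting of Proposition 4 and let $\mu(m)$ be the unique solution in $I$ of $G(\mu)=x$ with $x=\nu m/K$, for $m>0$ such that $x$ lies in the interior of $X$; let $p(m)=m/\mu(m)$ and $q(m)=\frac{1-\beta-\mu(m)}{\alpha(1-\sigma(1-\mu(m)))}$. If $\alpha(1-\beta\sigma)>0$, the markup $1/\mu(m)$ is strictly decreasing in $m$; if $\alpha(1-\beta\sigma)<0$, it is strictly increasing in $m$. In all cases $p(m)$ is strictly increasing and $q(m)$ strictly decreasing in $m$. If $\alpha=0$ (with $\beta\in(0,1)$) or $\beta=\frac1\sigma$ (with $\sigma>1$), the markup is constant in $m$ ($p(m)=\frac m{1-\beta}$, resp. $p(m)=\frac{\sigma m}{\sigma-1}$), the price is strictly increasing and the quantity $q(m)$ solving $u'(q)=\nu p(m)$ is strictly decreasing in $m$.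
   Context: Monopolistic competition setting: a firm with marginal cost $m>0$ faces inverse demand $p=u'(q)/\nu$ ($\nu>0$ fixed) with LFRRA utility, $-qu''(q)/u'(q)=\frac{\alpha q+\beta}{\alpha\sigma q+1}$ and $u'(q)=K(1+\alpha\sigma q)^{\beta-\frac1\sigma}q^{-\beta}$, $K>0$; $\mu=m/p$ is the inverse markup. $G$, $I$, $X$ are as follows (with $\Delta=\sqrt{(1-\beta)(1-\beta\sigma)}$): $G(\mu)=\mu[\frac{1-\beta\sigma}{1-\sigma(1-\mu)}]^{\beta-\frac1\sigma}[\frac{1-\beta-\mu}{\alpha(1-\sigma(1-\mu))}]^{-\beta}$ for $\sigma\neq0$ and $G(\mu)=\mu e^{-(1-\beta-\mu)}(\frac{1-\beta-\mu}{\alpha})^{-\beta}$ for $\sigma=0$. Case 1a ($\alpha>0$, $1-\beta\sigma>0$): $\beta\in(0,1)$: $X=(0,\infty)$, $I=(0,1-\beta)$ ($\sigma\le1$) or $(\frac{\sigma-1}\sigma,1-\beta)$ ($\sigma>1$); $\beta=0$: $X=(0,1]$, $I=(0,1]$ ($\sigma\le1$) or $(\frac{\sigma-1}\sigma,1]$ ($\sigma>1$). Case 1b ($\alpha>0$, $1-\beta\sigma<0$): $\beta\in(0,1)$: $X=(0,\infty)$, $I=(1-\beta,\frac{\sigma-1}\sigma)$; $\beta=1$: $X=(0,\alpha(\sigma-1))$, $I=(0,\frac{\sigma-1}\sigma)$. Case 2a ($\alpha<0$, $1-\beta\sigma>0$, $\beta\in(0,1)$): $I=(1-\beta,\bar\mu)$,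 $\bar\mu=\frac{(1-\beta)\sigma+\Delta}{(1-\beta)\sigma+1}$, $X=(\lim_{\mu\to\bar\mu^-}G(\mu),\infty)$. Case 2b ($\alpha<0$, $1-\beta\sigma<0$, $\beta\in(0,1)$): $X=(0,\infty)$, $I=(0,1-\beta)$. In each case $G(\mu)=x$ has a unique solution in $I$ for $x\in X$. *)

From Stdlib Require Import Reals Lra.
From Coquelicot Require Import Coquelicot.
Open Scope R_scope.

(* LFRRA marginal utility u'(q) = K (1+a s q)^(b - 1/s) q^(-b)  (s <> 0);
   for s = 0 we use the limiting form K exp(-a q) q^(-b). *)
Definition uprime (a b s K q : R) : R :=
  if Req_EM_T s 0 then K * exp (- (a * q)) * Rpower q (- b)
  else K * Rpower (1 + a * s * q) (b - / s) * Rpower q (- b).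

(* relative risk aversion  -q u''(q)/u'(q) = (a q + b)/(a s q + 1) *)
Definition rra (a b s q : R) : R := (a * q + b) / (a * s * q + 1).

Definition G (a b s mu : R) : R :=
  if Req_EM_T s 0 then
    mu * exp (- (1 - b - mu)) * Rpower ((1 - b - mu) / a) (- b)
  else
    mu * Rpower ((1 - b * s) / (1 - s * (1 - mu))) (b - / s)
       * Rpower ((1 - b - mu) / (a * (1 - s * (1 - mu)))) (- b).

Definition qmu (a b s mu : R) : R := (1 - b - mu) / (a * (1 - s * (1 - mu))).

Definition case1a (a b s : R) : Prop := 0 < a /\ 0 < 1 - b * s /\ 0 <= b < 1.
Definition case1b (a b s : R) : Prop := 0 < a /\ 1 - b * s < 0 /\ 0 < b <= 1.
Definition case2a (a b s : R) : Prop := a < 0 /\ 0 < 1 - b * s /\ 0 < b < 1.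
Definition case2b (a b s : R) : Prop := a < 0 /\ 1 - b * s < 0 /\ 0 < b < 1.

Definition setting (a b s : R) : Prop :=
  case1a a b s \/ case1b a b s \/ case2a a b s \/ case2b a b s.

Definition mubar (b s : R) : R :=
  ((1 - b) * s + sqrt ((1 - b) * (1 - b * s))) / ((1 - b) * s + 1).

Definition inI (a b s mu : R) : Prop :=
  (case1a a b s /\
     ((s <= 1 /\ 0 < mu) \/ (1 < s /\ (s - 1) / s < mu)) /\
     ((0 < b /\ mu < 1 - b) \/ (b = 0 /\ mu <= 1)))
  \/ (case1b a b s /\
     ((b < 1 /\ 1 - b < mu /\ mu < (s - 1) / s) \/
      (b = 1 /\ 0 < mu /\ mu < (s - 1) / s)))
  \/ (case2a a b s /\ 1 - b < mu /\ mu < mubar b s)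
  \/ (case2b a b s /\ 0 < mu /\ mu < 1 - b).

Definition inX (a b s x : R) : Prop :=
  (case1a a b s /\ ((0 < b /\ 0 < x) \/ (b = 0 /\ 0 < x /\ x <= 1)))
  \/ (case1b a b s /\
     ((b < 1 /\ 0 < x) \/ (b = 1 /\ 0 < x /\ x < a * (s - 1))))
  \/ (case2a a b s /\
      exists L : R, filterlim (G a b s) (at_left (mubar b s)) (locally L) /\ L < x)
  \/ (case2b a b s /\ 0 < x).

Definition interiorR (S : R -> Prop) (x : R) : Prop :=
  exists e : R, 0 < e /\ forall y, Rabs (y - x) < e -> S y.

Definition admissible (a s q : R) : Prop := 0 < q /\ 0 < 1 + a * s * q.

From Stdlib Require Import Reals Lra.
From Coquelicot Require Import Coquelicot.
Open Scope R_scope.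

(* Write G(mu) = mu Gbar(mu) with Gbar(mu) = u'(q(mu))/K, so that the price is
   p = m/mu = K Gbar(mu)/nu. Logarithmic differentiation gives
   Gbar'/Gbar = (1 - b s)(1 - mu) / ((1 - s (1 - mu)) (1 - b - mu)), and
   q'(mu) = -(1 - b s) / (a (1 - s (1 - mu))^2); wherever q(mu) is an admissible
   quantity, a (1 - b s) Gbar' > 0 and a (1 - b s) q' < 0. On the interval I of each
   case, G' has the same direction: its sign is that of (1 - b s) Gcrit, a quadratic
   in mu that keeps a constant sign there. Since G(mu(m)) = nu m / K increases with m,
   mu(m) moves in the direction of a (1 - b s), p(m) increases and q(m) decreases.
   For a = 0 or b = 1/s the relative risk aversion is the constant b, resp. 1/s,
   u' is a power of q and the markup is constant. *)

Lemma Rdiv_pos_of_mult_pos x y : 0 < x * y -> 0 < x / y.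
Proof.
intros Hxy. assert (Hy : y <> 0) by (intros ->; lra).
replace (x / y) with (x * y * (/ y * / y)) by (field; exact Hy).
assert (/ y <> 0) by (apply Rinv_neq_0_compat; exact Hy).
apply Rmult_lt_0_compat; [exact Hxy|nra].
Qed.

Lemma strict_mono_of_deriv_sign (f df : R -> R) (e l r : R) :
  (forall t, l < t < r -> is_derive f t (df t)) ->
  (forall t, l < t < r -> 0 < e * df t) ->
  forall x y, l < x -> x < y -> y < r -> 0 < e * (f y - f x).
Proof.
intros Hd Hsign x y Hlx Hxy Hyr.
assert (Hmin : Rmin x y = x) by (apply Rmin_left; lra).
assert (Hmax : Rmax x y = y) by (apply Rmax_right; lra).
destruct (MVT_gen f x y df) as [c [Hc Hmvt]].
- intros t Ht. rewrite Hmin, Hmax in Ht. apply Hd. lra.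
- intros t Ht. rewrite Hmin, Hmax in Ht.
  apply continuity_pt_filterlim, (ex_derive_continuous (V := R_NormedModule)).
  exists (df t). apply Hd. lra.
- rewrite Hmin, Hmax in Hc. rewrite Hmvt.
  specialize (Hsign c ltac:(lra)). nra.
Qed.

Lemma strict_mono_dir_transfer (f g : R -> R) (e l r : R) :
  (forall x y, l < x -> x < y -> y < r -> 0 < e * (f y - f x)) ->
  (forall x y, l < x -> x < y -> y < r -> 0 < e * (g y - g x)) ->
  forall x y, l < x < r -> l < y < r -> f x < f y -> 0 < e * (y - x) /\ g x < g y.
Proof.
intros Hf Hg x y Hx Hy Hfxy.
destruct (Rtotal_order x y) as [Hxy|[<-|Hyx]].
- pose proof (Hf x y ltac:(lra) Hxy ltac:(lra)).
  pose proof (Hg x y ltac:(lra) Hxy ltac:(lra)). split; nra.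
- lra.
- pose proof (Hf y x ltac:(lra) Hyx ltac:(lra)).
  pose proof (Hg y x ltac:(lra) Hyx ltac:(lra)). split; nra.
Qed.

(* [Gbar mu = u'(q(mu)) / K], since [1 + a s q(mu) = (1 - b s) / (1 - s (1 - mu))]. *)
Definition Gbar (a b s t : R) : R :=
  if Req_EM_T s 0 then exp (- (1 - b - t)) * Rpower ((1 - b - t) / a) (- b)
  else Rpower ((1 - b * s) / (1 - s * (1 - t))) (b - / s)
       * Rpower ((1 - b - t) / (a * (1 - s * (1 - t)))) (- b).

Lemma G_eq_mul_Gbar a b s t : G a b s t = t * Gbar a b s t.
Proof. unfold G, Gbar. destruct (Req_EM_T s 0); ring. Qed.

Lemma Gbar_pos a b s t : 0 < Gbar a b s t.
Proof.
unfold Gbar, Rpower. destruct (Req_EM_T s 0); apply Rmult_lt_0_compat; apply exp_pos.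
Qed.

Definition Gbar_logderiv (b s t : R) : R := / (1 - s * (1 - t)) + b / (1 - b - t).

(* [1 + t * Gbar_logderiv b s t = Gcrit b s t / ((1 - s (1 - t)) (1 - b - t))] *)
Definition Gcrit (b s t : R) : R :=
  (1 - s * (1 - t)) * (1 - b - t) + t * (1 - b - t) + b * t * (1 - s * (1 - t)).

Lemma Gcrit_square b s t :
  ((1 - b) * s + 1) * Gcrit b s t
  = (1 - b) * (1 - b * s) - (((1 - b) * s + 1) * t - s * (1 - b)) ^ 2.
Proof. unfold Gcrit. ring. Qed.

Lemma qmu_pos_nonzero a b s t : 0 < qmu a b s t ->
  a <> 0 /\ 1 - s * (1 - t) <> 0 /\ 1 - b - t <> 0.
Proof.
unfold qmu. intros Hq.
assert (Haw : a * (1 - s * (1 - t)) <> 0) by (intros E; rewrite E, Rdiv_0_r in Hq; lra).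
assert (Hv : 1 - b - t <> 0) by (intros E; rewrite E, Rdiv_0_l in Hq; lra).
split; [|split]; [..|exact Hv]; intros E; apply Haw; rewrite E; ring.
Qed.

Lemma one_add_qmu a b s t : 0 < qmu a b s t ->
  1 + a * s * qmu a b s t = (1 - b * s) / (1 - s * (1 - t)).
Proof.
intros Hq. destruct (qmu_pos_nonzero a b s t Hq) as (Ha & Hw & _).
unfold qmu. field. auto.
Qed.

Lemma admissible_qmu a b s t :
  0 < (1 - b - t) * (a * (1 - s * (1 - t))) -> 0 < (1 - b * s) * (1 - s * (1 - t)) ->
  admissible a s (qmu a b s t).
Proof.
intros Hq Hr. assert (Hq' : 0 < qmu a b s t) by (apply Rdiv_pos_of_mult_pos, Hq).
split; [exact Hq'|]. rewrite one_add_qmu by exact Hq'. apply Rdiv_pos_of_mult_pos, Hr.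
Qed.

Lemma is_derive_Gbar a b s t : admissible a s (qmu a b s t) ->
  is_derive (Gbar a b s) t (Gbar a b s t * Gbar_logderiv b s t).
Proof.
intros [Hq Hr]. destruct (qmu_pos_nonzero a b s t Hq) as (Ha & Hw & Hv).
rewrite one_add_qmu in Hr by exact Hq. unfold qmu in Hq.
assert (Hbs : 1 - b * s <> 0) by (intros E; rewrite E, Rdiv_0_l in Hr; lra).
unfold Gbar, Gbar_logderiv. destruct (Req_EM_T s 0) as [->|Hs].
- replace (a * (1 - 0 * (1 - t))) with a in Hq by ring.
  unfold Rpower, Rminus, Rdiv in *. auto_derive.
  + repeat split; auto.
  + set (X := exp _). set (Y := exp _). field. unfold Rminus in *. tauto.
- unfold Rpower, Rminus, Rdiv in *. auto_derive.
  + repeat split; auto.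
  + set (X := exp _). set (Y := exp _). field. unfold Rminus in *. tauto.
Qed.

Lemma is_derive_G a b s t : admissible a s (qmu a b s t) ->
  is_derive (G a b s) t (Gbar a b s t * (1 + t * Gbar_logderiv b s t)).
Proof.
intros Hadm. apply is_derive_ext with (f := fun u => u * Gbar a b s u).
{ intros u. symmetry. apply G_eq_mul_Gbar. }
replace (Gbar a b s t * (1 + t * Gbar_logderiv b s t))
  with (1 * Gbar a b s t + t * (Gbar a b s t * Gbar_logderiv b s t)) by ring.
apply (is_derive_mult (fun u => u) (Gbar a b s)).
- apply (is_derive_id (K := R_AbsRing)).
- apply is_derive_Gbar, Hadm.
- intros. apply Rmult_comm.
Qed.

Lemma is_derive_qmu a b s t : a <> 0 -> 1 - s * (1 - t) <> 0 ->
  is_derive (qmu a b s) t (- (1 - b * s) / (a * (1 - s * (1 - t)) ^ 2)).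
Proof.
intros Ha Hw. unfold qmu. auto_derive.
- apply Rmult_integral_contrapositive_currified; auto. unfold Rminus in Hw. auto.
- unfold Rminus in *. field. auto.
Qed.

Lemma Gbar_logderiv_sign a b s t : t < 1 -> admissible a s (qmu a b s t) ->
  0 < a * (1 - b * s) * Gbar_logderiv b s t.
Proof.
intros Ht [Hq Hr]. destruct (qmu_pos_nonzero a b s t Hq) as (Ha & Hw & Hv).
rewrite one_add_qmu in Hr by exact Hq.
replace (a * (1 - b * s) * Gbar_logderiv b s t)
  with ((1 - t) * ((1 - b * s) / (1 - s * (1 - t))) ^ 2 / qmu a b s t)
  by (unfold Gbar_logderiv, qmu; field; auto).
apply Rdiv_lt_0_compat; [|exact Hq].
apply Rmult_lt_0_compat; [lra|apply pow_lt, Hr].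
Qed.

Lemma G_deriv_sign a b s t : admissible a s (qmu a b s t) ->
  0 < (1 - b * s) * Gcrit b s t ->
  0 < a * (1 - b * s) * (1 + t * Gbar_logderiv b s t).
Proof.
intros [Hq _] Hcrit. destruct (qmu_pos_nonzero a b s t Hq) as (Ha & Hw & Hv).
replace (a * (1 - b * s) * (1 + t * Gbar_logderiv b s t))
  with ((1 - b * s) * Gcrit b s t / ((1 - s * (1 - t)) ^ 2 * qmu a b s t))
  by (unfold Gbar_logderiv, Gcrit, qmu; field; auto).
apply Rdiv_lt_0_compat; [exact Hcrit|].
apply Rmult_lt_0_compat; [apply pow2_gt_0, Hw|exact Hq].
Qed.

Definition monotone_window (a b s l r : R) : Prop :=
  forall t, l < t < r ->
  0 < t < 1 /\ admissible a s (qmu a b s t) /\ 0 < (1 - b * s) * Gcrit b s t.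

Lemma monotone_window_dir a b s l r : monotone_window a b s l r ->
  forall x y, l < x -> x < y -> y < r ->
  0 < a * (1 - b * s) * (G a b s y - G a b s x) /\
  0 < a * (1 - b * s) * (Gbar a b s y - Gbar a b s x) /\
  0 < a * (1 - b * s) * (- qmu a b s y - - qmu a b s x).
Proof.
intros Hwin x y Hx Hxy Hy. split; [|split]; revert x y Hx Hxy Hy.
- apply (strict_mono_of_deriv_sign _ (fun t => Gbar a b s t * (1 + t * Gbar_logderiv b s t))).
  + intros t Ht. apply is_derive_G, (Hwin t Ht).
  + intros t Ht. destruct (Hwin t Ht) as (_ & Hadm & Hcrit).
    rewrite Rmult_comm, Rmult_assoc.
    apply Rmult_lt_0_compat; [apply Gbar_pos|].
    rewrite Rmult_comm. apply G_deriv_sign; assumption.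
- apply (strict_mono_of_deriv_sign _ (fun t => Gbar a b s t * Gbar_logderiv b s t)).
  + intros t Ht. apply is_derive_Gbar, (Hwin t Ht).
  + intros t Ht. destruct (Hwin t Ht) as (Ht01 & Hadm & _).
    rewrite Rmult_comm, Rmult_assoc.
    apply Rmult_lt_0_compat; [apply Gbar_pos|].
    rewrite Rmult_comm. apply Gbar_logderiv_sign; [lra|assumption].
- apply (strict_mono_of_deriv_sign (fun t => - qmu a b s t)
           (fun t => - (- (1 - b * s) / (a * (1 - s * (1 - t)) ^ 2)))).
  + intros t Ht. destruct (Hwin t Ht) as (_ & [Hq _] & _).
    destruct (qmu_pos_nonzero a b s t Hq) as (Ha & Hw & _).
    apply (is_derive_opp (qmu a b s)), is_derive_qmu; auto.
  + intros t Ht. destruct (Hwin t Ht) as (_ & [Hq Hr] & _).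
    destruct (qmu_pos_nonzero a b s t Hq) as (Ha & Hw & _).
    rewrite one_add_qmu in Hr by exact Hq.
    replace (a * (1 - b * s) * - (- (1 - b * s) / (a * (1 - s * (1 - t)) ^ 2)))
      with (((1 - b * s) / (1 - s * (1 - t))) ^ 2) by (field; auto).
    apply pow_lt, Hr.
Qed.

Lemma monotone_window_order a b s l r mu1 mu2 : monotone_window a b s l r ->
  l < mu1 < r -> l < mu2 < r -> G a b s mu1 < G a b s mu2 ->
  0 < a * (1 - b * s) * (mu2 - mu1) /\
  Gbar a b s mu1 < Gbar a b s mu2 /\ qmu a b s mu2 < qmu a b s mu1.
Proof.
intros Hwin H1 H2 HG.
pose proof (monotone_window_dir a b s l r Hwin) as Hdir.
destruct (strict_mono_dir_transfer (G a b s) (Gbar a b s) _ l r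
            (fun x y Hx Hxy Hy => proj1 (Hdir x y Hx Hxy Hy))
            (fun x y Hx Hxy Hy => proj1 (proj2 (Hdir x y Hx Hxy Hy)))
            mu1 mu2 H1 H2 HG) as [Hmu HGbar].
destruct (strict_mono_dir_transfer (G a b s) (fun t => - qmu a b s t) _ l r
            (fun x y Hx Hxy Hy => proj1 (Hdir x y Hx Hxy Hy))
            (fun x y Hx Hxy Hy => proj2 (proj2 (Hdir x y Hx Hxy Hy)))
            mu1 mu2 H1 H2 HG) as [_ Hq].
split; [exact Hmu|split; [exact HGbar|lra]].
Qed.

Definition solutions_within (a b s l r : R) : Prop :=
  forall mu, inI a b s mu -> interiorR (inX a b s) (G a b s mu) -> l < mu < r.

Lemma G_b0_at_one a s : G a 0 s 1 = 1.
Proof.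
unfold G, Rpower. destruct (Req_EM_T s 0).
- replace (- (1 - 0 - 1)) with 0 by ring. replace (- 0) with 0 by ring.
  rewrite Rmult_0_l, exp_0. ring.
- replace ((1 - 0 * s) / (1 - s * (1 - 1))) with 1 by field. rewrite ln_1.
  replace (- 0) with 0 by ring. rewrite !Rmult_0_l, Rmult_0_r, exp_0. ring.
Qed.

Lemma interior_inX_b0_lt_one a s x : case1a a 0 s -> interiorR (inX a 0 s) x -> x < 1.
Proof.
intros Hc [e [He H]]. unfold case1a in Hc.
assert (Hy : Rabs (x + e / 2 - x) < e) by (rewrite Rabs_pos_eq; lra).
destruct (H (x + e / 2) Hy)
  as [[_ [[? ?]|[_ [_ ?]]]]|[[[? [? ?]] _]|[[[? _] _]|[[? _] _]]]]; lra.
Qed.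

Lemma Gcrit_neg b s t : 0 < t -> 0 < b <= 1 -> 1 - b * s < 0 -> Gcrit b s t < 0.
Proof.
intros Ht Hb Hbs. assert (Hs : 1 < s) by nra.
destruct (Rle_lt_or_eq_dec b 1 (proj2 Hb)) as [Hb1| ->].
- pose proof (Gcrit_square b s t) as Hsq.
  pose proof (pow2_ge_0 (((1 - b) * s + 1) * t - s * (1 - b))).
  assert (Hc : 0 < (1 - b) * s + 1) by nra.
  assert ((1 - b) * (1 - b * s) < 0) by (apply Rmult_pos_neg; lra).
  assert (((1 - b) * s + 1) * Gcrit b s t < 0) by lra. nra.
- unfold Gcrit. nra.
Qed.

Lemma case1a_window a b s : case1a a b s ->
  exists l r, monotone_window a b s l r /\ solutions_within a b s l r.
Proof.
intros (Ha & Hbs & Hb).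
set (l := if Rle_dec s 1 then 0 else (s - 1) / s).
assert (Hl : forall t, (s <= 1 /\ 0 < t) \/ (1 < s /\ (s - 1) / s < t) -> l < t).
{ intros t. unfold l. destruct (Rle_dec s 1); intuition lra. }
assert (Hw : forall t, l < t -> t < 1 -> 0 < t /\ 0 < 1 - s * (1 - t)).
{ intros t. unfold l. destruct (Rle_dec s 1) as [Hs|Hs]; intros Hlt Ht1.
  - split; [lra|]. destruct (Rle_lt_dec 0 s); nra.
  - assert (0 < (s - 1) / s) by (apply Rdiv_lt_0_compat; lra).
    assert (s * ((s - 1) / s) = s - 1) by (field; lra). nra. }
exists l, (1 - b). split.
- intros t [Hlt Htr]. destruct (Hw t Hlt ltac:(lra)) as [Ht Hwt].
  split; [lra|split].
  + apply admissible_qmu; apply Rmult_lt_0_compat; nra.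
  + apply Rmult_lt_0_compat; [lra|]. unfold Gcrit.
    assert (0 < (1 - s * (1 - t)) * (1 - b - t)) by (apply Rmult_lt_0_compat; lra).
    assert (0 <= b * t * (1 - s * (1 - t))) by (apply Rmult_le_pos; nra).
    nra.
- intros mu HI Hint.
  destruct HI as [(_ & Hmu & Hmub)|[(Hc & _)|[(Hc & _)|(Hc & _)]]];
    [|unfold case1b, case2a, case2b in Hc; lra..].
  split; [apply Hl, Hmu|].
  destruct Hmub as [[_ ?]|[-> Hmu1]]; [assumption|].
  destruct (Rle_lt_or_eq_dec _ _ Hmu1) as [| ->]; [lra|].
  rewrite G_b0_at_one in Hint.
  pose proof (interior_inX_b0_lt_one a s 1 (conj Ha (conj Hbs Hb)) Hint). lra.
Qed.

Lemma case2b_window a b s : case2b a b s ->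
  exists l r, monotone_window a b s l r /\ solutions_within a b s l r.
Proof.
intros (Ha & Hbs & Hb). exists 0, (1 - b). split.
- intros t Ht. assert (Hw : 1 - s * (1 - t) < 0) by nra.
  split; [lra|split].
  + apply admissible_qmu; [apply Rmult_lt_0_compat|]; [lra|apply Rmult_neg_neg; lra..].
  + apply Rmult_neg_neg; [lra|apply Gcrit_neg; lra].
- intros mu HI _.
  destruct HI as [(Hc & _)|[(Hc & _)|[(Hc & _)|(_ & Hmu)]]];
    [unfold case1a, case1b, case2a in Hc; lra..|exact Hmu].
Qed.

Lemma case1b_window a b s : case1b a b s ->
  exists l r, monotone_window a b s l r /\ solutions_within a b s l r.
Proof.
intros (Ha & Hbs & Hb). assert (Hs : 1 < s) by nra.
assert (Hsl : s * ((s - 1) / s) = s - 1) by (field; lra).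
exists (1 - b), ((s - 1) / s). split.
- intros t Ht. assert (Hw : 1 - s * (1 - t) < 0) by nra.
  split; [nra|split].
  + apply admissible_qmu; apply Rmult_neg_neg; nra.
  + apply Rmult_neg_neg; [lra|apply Gcrit_neg; lra].
- intros mu HI _.
  destruct HI as [(Hc & _)|[(_ & [(_ & Hmu)|(-> & Hmu)])|[(Hc & _)|(Hc & _)]]];
    [unfold case1a in Hc; lra|lra|lra|unfold case2a, case2b in Hc; lra..].
Qed.

(* [mubar] is the root of [Gcrit] beyond [1 - b]: [c mubar = s (1 - b) + D] with
   [c = (1 - b) s + 1] and [D^2 = (1 - b) (1 - b s)]. *)
Lemma Gcrit_pos_below_mubar b s t : 0 < b < 1 -> 0 < 1 - b * s -> 1 - b < t < mubar b s ->
  t < 1 /\ 0 < Gcrit b s t.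
Proof.
intros Hb Hbs [Hlo Hhi].
set (c := (1 - b) * s + 1).
set (D := sqrt ((1 - b) * (1 - b * s))).
set (y := c * t - s * (1 - b)).
assert (HD0 : 0 <= D) by apply sqrt_pos.
assert (HD2 : D * D = (1 - b) * (1 - b * s)) by (apply sqrt_sqrt; nra).
assert (Hc : c <> 0).
{ intros E. unfold mubar in Hhi. fold c in Hhi. rewrite E, Rdiv_0_r in Hhi. lra. }
assert (Hmb : c * mubar b s = s * (1 - b) + D) by (unfold mubar; fold c D; field; exact Hc).
assert (Hcrit : c * Gcrit b s t = (D - y) * (D + y)).
{ unfold c, y. rewrite Gcrit_square. fold c. rewrite <- HD2. ring. }
destruct (Rlt_or_le 0 c) as [Hcp|Hcn].
- assert (c * t < c * mubar b s) by (apply Rmult_lt_compat_l; lra).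
  assert (Hy : y < D) by (unfold y; lra).
  assert (c * (1 - b) < c * t) by (apply Rmult_lt_compat_l; lra).
  assert (Hy0 : 0 < y) by (unfold y, c in *; nra).
  assert (HD1 : D < 1) by (unfold c in *; nra).
  split; [unfold y, c in *; nra|].
  assert (0 < c * Gcrit b s t) by (rewrite Hcrit; apply Rmult_lt_0_compat; lra). nra.
- assert (Hcn' : c < 0) by lra.
  assert (c * mubar b s < c * t) by (apply Rmult_lt_gt_compat_neg_l; lra).
  assert (Hy : D < y) by (unfold y; lra).
  assert (HD1 : 1 < D) by (unfold c in *; nra).
  split; [destruct (Rlt_or_le t 1) as [|Ht1]; [assumption|unfold y, c in *; nra]|].
  assert (c * Gcrit b s t < 0) by (rewrite Hcrit; apply Rmult_neg_pos; lra). nra.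
Qed.

Lemma case2a_window a b s : case2a a b s ->
  exists l r, monotone_window a b s l r /\ solutions_within a b s l r.
Proof.
intros (Ha & Hbs & Hb). exists (1 - b), (mubar b s). split.
- intros t Ht. destruct (Gcrit_pos_below_mubar b s t Hb Hbs Ht) as [Ht1 Hcrit].
  assert (Hw : 0 < 1 - s * (1 - t)).
  { assert (0 < 1 - b - t + b * t) by nra. unfold Gcrit in Hcrit. nra. }
  split; [lra|split].
  + apply admissible_qmu; [apply Rmult_neg_neg; nra|apply Rmult_lt_0_compat; lra].
  + apply Rmult_lt_0_compat; assumption.
- intros mu HI _.
  destruct HI as [(Hc & _)|[(Hc & _)|[(_ & Hmu)|(Hc & _)]]];
    [unfold case1a, case1b in Hc; lra..|exact Hmu|unfold case2b in Hc; lra].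
Qed.

Lemma setting_window a b s : setting a b s ->
  exists l r, monotone_window a b s l r /\ solutions_within a b s l r.
Proof.
intros [H|[H|[H|H]]];
  [apply case1a_window|apply case1b_window|apply case2a_window|apply case2b_window]; exact H.
Qed.

Lemma price_eq_Gbar a b s nu K m mu : 0 < nu -> 0 < K -> 0 < mu ->
  G a b s mu = nu * m / K -> m / mu = K * Gbar a b s mu / nu.
Proof.
intros Hnu HK Hmu HG. rewrite G_eq_mul_Gbar in HG.
replace m with (K * (mu * Gbar a b s mu) / nu) by (rewrite HG; field; lra).
field. lra.
Qed.

Lemma solution_map_order a b s nu K l r (mu : R -> R) m1 m2 :
  0 < nu -> 0 < K -> monotone_window a b s l r -> solutions_within a b s l r ->
  (forall m, 0 < m -> interiorR (inX a b s) (nu * m / K) ->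
     inI a b s (mu m) /\ G a b s (mu m) = nu * m / K) ->
  0 < m1 -> interiorR (inX a b s) (nu * m1 / K) ->
  0 < m2 -> interiorR (inX a b s) (nu * m2 / K) -> m1 < m2 ->
  0 < mu m1 /\ 0 < mu m2 /\ 0 < a * (1 - b * s) * (mu m2 - mu m1) /\
  m1 / mu m1 < m2 / mu m2 /\ qmu a b s (mu m2) < qmu a b s (mu m1).
Proof.
intros Hnu HK Hwin Hsol Hmu Hm1 Hx1 Hm2 Hx2 H12.
destruct (Hmu m1 Hm1 Hx1) as [HI1 HG1]. destruct (Hmu m2 Hm2 Hx2) as [HI2 HG2].
assert (Hr1 : l < mu m1 < r) by (apply Hsol; [exact HI1|rewrite HG1; exact Hx1]).
assert (Hr2 : l < mu m2 < r) by (apply Hsol; [exact HI2|rewrite HG2; exact Hx2]).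
assert (Hpos : forall m, l < mu m < r -> 0 < mu m) by (intros m Hm; apply (Hwin (mu m) Hm)).
assert (HG : G a b s (mu m1) < G a b s (mu m2)).
{ rewrite HG1, HG2. unfold Rdiv. apply Rmult_lt_compat_r; [apply Rinv_0_lt_compat; lra|nra]. }
destruct (monotone_window_order a b s l r _ _ Hwin Hr1 Hr2 HG) as (Hdir & HGbar & Hq).
pose proof (Hpos m1 Hr1). pose proof (Hpos m2 Hr2).
repeat split; try assumption.
rewrite (price_eq_Gbar a b s nu K m1), (price_eq_Gbar a b s nu K m2) by assumption.
unfold Rdiv. apply Rmult_lt_compat_r; [apply Rinv_0_lt_compat; lra|nra].
Qed.

Lemma Rpower_neg_exponent_anti K c q1 q2 : 0 < K -> 0 < c -> 0 < q1 -> 0 < q2 ->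
  K * Rpower q1 (- c) < K * Rpower q2 (- c) -> q2 < q1.
Proof.
intros HK Hc H1 H2 H. destruct (Rlt_or_le q2 q1) as [|Hle]; [assumption|].
assert (Rpower q2 (- c) <= Rpower q1 (- c)).
{ rewrite !Rpower_Ropp.
  apply Rinv_le_contravar; [unfold Rpower; apply exp_pos|apply Rle_Rpower_l; lra]. }
nra.
Qed.

Lemma constant_markup a b s nu K r (p : R -> R) : 0 < nu -> 0 < K -> 0 < r < 1 ->
  (forall m, p m = m / (1 - r)) ->
  (forall q, admissible a s q -> rra a b s q = r /\ uprime a b s K q = K * Rpower q (- r)) ->
  (forall m q, 0 < m -> admissible a s q ->
     nu * m = (1 - rra a b s q) * uprime a b s K q -> uprime a b s K q / nu = p m) /\
  (forall m1 m2, 0 < m1 -> m1 < m2 -> p m1 < p m2) /\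
  (forall m1 m2 q1 q2, 0 < m1 -> m1 < m2 -> admissible a s q1 -> admissible a s q2 ->
     uprime a b s K q1 = nu * p m1 -> uprime a b s K q2 = nu * p m2 -> q2 < q1).
Proof.
intros Hnu HK Hr Hp Hiso.
assert (Hpmono : forall m1 m2, m1 < m2 -> p m1 < p m2).
{ intros m1 m2 H. rewrite !Hp. unfold Rdiv.
  apply Rmult_lt_compat_r; [apply Rinv_0_lt_compat; lra|exact H]. }
split; [|split].
- intros m q _ Hq E. destruct (Hiso q Hq) as [Hrra _]. rewrite Hrra in E. rewrite Hp.
  replace m with ((1 - r) * uprime a b s K q / nu) by (rewrite <- E; field; lra).
  field. lra.
- intros m1 m2 _. apply Hpmono.
- intros m1 m2 q1 q2 _ H12 Hq1 Hq2 E1 E2.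
  destruct (Hiso q1 Hq1) as [_ U1]. destruct (Hiso q2 Hq2) as [_ U2].
  apply (Rpower_neg_exponent_anti K r); [lra|lra|apply Hq1|apply Hq2|].
  rewrite <- U1, <- U2, E1, E2. apply Rmult_lt_compat_l; [lra|apply Hpmono, H12].
Qed.

Lemma rra_alpha0 b s q : rra 0 b s q = b.
Proof. unfold rra. field. Qed.

Lemma uprime_alpha0 b s K q : uprime 0 b s K q = K * Rpower q (- b).
Proof.
unfold uprime, Rpower. destruct (Req_EM_T s 0).
- replace (- (0 * q)) with 0 by ring. rewrite exp_0. ring.
- replace (1 + 0 * s * q) with 1 by ring. rewrite ln_1, Rmult_0_r, exp_0. ring.
Qed.

Lemma rra_beta_inv_sigma a s q : s <> 0 -> 0 < 1 + a * s * q -> rra a (/ s) s q = / s.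
Proof. intros Hs Hq. unfold rra. field. split; [exact Hs|lra]. Qed.

Lemma uprime_beta_inv_sigma a s K q : s <> 0 -> uprime a (/ s) s K q = K * Rpower q (- / s).
Proof.
intros Hs. unfold uprime, Rpower. destruct (Req_EM_T s 0); [contradiction|].
replace (/ s - / s) with 0 by ring. rewrite Rmult_0_l, exp_0. ring.
Qed.

Theorem proposition5 (a b s nu K : R) (hnu : 0 < nu) (hK : 0 < K) :
  (* Part 1: the setting of Proposition 4 *)
  (setting a b s ->
   forall mu : R -> R,
   (forall m, 0 < m -> interiorR (inX a b s) (nu * m / K) ->
      inI a b s (mu m) /\ G a b s (mu m) = nu * m / K) ->
   let D := fun m => 0 < m /\ interiorR (inX a b s) (nu * m / K) in
   (0 < a * (1 - b * s) ->
      forall m1 m2, D m1 -> D m2 -> m1 < m2 -> / mu m2 < / mu m1) /\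
   (a * (1 - b * s) < 0 ->
      forall m1 m2, D m1 -> D m2 -> m1 < m2 -> / mu m1 < / mu m2) /\
   (forall m1 m2, D m1 -> D m2 -> m1 < m2 ->
      m1 / mu m1 < m2 / mu m2 /\ qmu a b s (mu m2) < qmu a b s (mu m1)))
  /\
  (* Part 2: alpha = 0, beta in (0,1): constant markup, p(m) = m/(1-beta) *)
  (a = 0 -> 0 < b < 1 ->
   (forall m q, 0 < m -> admissible a s q ->
      nu * m = (1 - rra a b s q) * uprime a b s K q ->
      uprime a b s K q / nu = m / (1 - b)) /\
   (forall m1 m2, 0 < m1 -> m1 < m2 -> m1 / (1 - b) < m2 / (1 - b)) /\
   (forall m1 m2 q1 q2, 0 < m1 -> m1 < m2 -> admissible a s q1 -> admissible a s q2 ->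
      uprime a b s K q1 = nu * (m1 / (1 - b)) ->
      uprime a b s K q2 = nu * (m2 / (1 - b)) -> q2 < q1))
  /\
  (* Part 3: beta = 1/sigma, sigma > 1: constant markup, p(m) = sigma m/(sigma-1) *)
  (1 < s -> b = / s ->
   (forall m q, 0 < m -> admissible a s q ->
      nu * m = (1 - rra a b s q) * uprime a b s K q ->
      uprime a b s K q / nu = s * m / (s - 1)) /\
   (forall m1 m2, 0 < m1 -> m1 < m2 -> s * m1 / (s - 1) < s * m2 / (s - 1)) /\
   (forall m1 m2 q1 q2, 0 < m1 -> m1 < m2 -> admissible a s q1 -> admissible a s q2 ->
      uprime a b s K q1 = nu * (s * m1 / (s - 1)) ->
      uprime a b s K q2 = nu * (s * m2 / (s - 1)) -> q2 < q1)).
Proof.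
split; [|split].
- intros Hset mu Hmu D. destruct (setting_window a b s Hset) as (l & r & Hwin & Hsol).
  assert (Hord : forall m1 m2, D m1 -> D m2 -> m1 < m2 ->
    0 < mu m1 /\ 0 < mu m2 /\ 0 < a * (1 - b * s) * (mu m2 - mu m1) /\
    m1 / mu m1 < m2 / mu m2 /\ qmu a b s (mu m2) < qmu a b s (mu m1)).
  { intros m1 m2 [H1 X1] [H2 X2].
    exact (solution_map_order a b s nu K l r mu m1 m2 hnu hK Hwin Hsol Hmu H1 X1 H2 X2). }
  split; [|split]; [intros He m1 m2 D1 D2 H12..|intros m1 m2 D1 D2 H12];
    destruct (Hord m1 m2 D1 D2 H12) as (Hmu1 & Hmu2 & Hdir & Hp & Hq).
  + apply Rinv_0_lt_contravar; nra.
  + apply Rinv_0_lt_contravar; nra.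
  + split; assumption.
- intros -> Hb. apply (constant_markup 0 b s nu K b (fun m => m / (1 - b))); auto.
  intros q _. split; [apply rra_alpha0|apply uprime_alpha0].
- intros Hs ->. assert (Hs0 : s <> 0) by lra.
  apply (constant_markup a (/ s) s nu K (/ s) (fun m => s * m / (s - 1))); auto.
  + split; [apply Rinv_0_lt_compat|rewrite <- Rinv_1; apply Rinv_lt_contravar]; lra.
  + intros m. field. lra.
  + intros q [_ Hq]. split; [apply rra_beta_inv_sigma|apply uprime_beta_inv_sigma]; assumption.
Qed.
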